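(* Let $n$ and $k$ be even integers with $1\le k<n/2$, $\gcd(n,k)=2$ and $4\nmid n$. Then (a) $\lambda\in A(n,k)$ if and only if $k^2\equiv1\pmod{n/2}$; (b) $\tau\in A(n,k)$ if and only if $k^2\equiv-1\pmod{n/2}$. Moreover, if $\lambda\in A(n,k)$ then $\lambda\in B(n,k)$, and if $\tau\in A(n,k)$ then $\tau\in B(n,k)$.
   Context: $\mathrm{DGP}(n,k)$ ($1\le k<n/2$) is the graph with vertex set $\{(u_i,j),(v_i,j): 0\le i\le n-1,\ j\in\{0,1\}\}$ and edges $\{(u_i,j),(u_{i+1},1-j)\}$, $\{(u_i,j),(v_i,1-j)\}$ (spokes, forming the set $\mathcal{S}$), $\{(v_i,j),(v_{i+k},1-j)\}$, subscripts mod $n$ (the canonical double cover of the generalized Petersen graph $\mathrm{GP}(n,k)$). $A(n,k)$ is its automorphism group and $B(n,k)$ the setwise stabilizer of $\mathcal{S}$ in $A(n,k)$. Define permutations $\lambda,\tau$ of the vertex set (subscripts mod $n$; $n$ even so parity of $i+j$ is well defined): if $i+j$ is odd, $(u_i,j)^\lambda=(v_{1+(i-k)k},j)$, $(v_i,j)^\lambda=(u_{ik},j)$; if $i+j$ is even, $(u_i,j)^\lambda=(v_{ik},j)$, $(v_i,j)^\lambda=(u_{1+(i-k)k},j)$. Similarly, if $i+j$ is odd, $(u_i,j)^\tau=(v_{-1+(i-k)k},j)$, $(v_i,j)^\tau=(u_{ik},j)$; if $i+j$ is even, $(u_i,j)^\tau=(v_{ik},j)$, $(v_i,j)^\tau=(u_{-1+(i-k)k},j)$.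 *)

From mathcomp Require Import all_boot.
Set Implicit Arguments. Unset Strict Implicit. Unset Printing Implicit Defensive.

(* Vertices of DGP(n,k): inl (i,j) is (u_i, j), inr (i,j) is (v_i, j);
   j : bool encodes j in {0,1} (false = 0, true = 1). *)
Definition vertex (n : nat) := (('I_n * bool) + ('I_n * bool))%type.

(* Reduction of a natural number mod n, as an element of 'I_n
   (the witness i : 'I_n guarantees n > 0). *)
Definition zmod (n : nat) (i : 'I_n) (m : nat) : 'I_n :=
  Ordinal (ltn_pmod m (leq_ltn_trans (leq0n i) (ltn_ord i))).

Definition dgp_adj (n k : nat) (x y : vertex n) : bool :=
  match x, y with
  | inl (i, j), inl (i', j') =>
      (j' == ~~ j) && ((val i' == (i + 1) %% n) || (val i == (i' + 1) %% n))
  | inl (i, j), inr (i', j') => (i == i') && (j' == ~~ j)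
  | inr (i, j), inl (i', j') => (i == i') && (j' == ~~ j)
  | inr (i, j), inr (i', j') =>
      (j' == ~~ j) && ((val i' == (i + k) %% n) || (val i == (i' + k) %% n))
  end.

Definition is_spoke (n k : nat) (x y : vertex n) : bool :=
  dgp_adj k x y &&
  match x, y with
  | inl _, inr _ | inr _, inl _ => true
  | _, _ => false
  end.

Definition in_A (n k : nat) (f : vertex n -> vertex n) : Prop :=
  bijective f /\ forall x y, dgp_adj k (f x) (f y) = dgp_adj k x y.

Definition in_B (n k : nat) (f : vertex n -> vertex n) : Prop :=
  in_A k f /\ forall x y, is_spoke k (f x) (f y) = is_spoke k x y.

(* lambda; i - k is computed as i + n - k (k < n), so (i-k)k mod n is
   ((i + n - k) * k) mod n. *)
Definition lam (n k : nat) (x : vertex n) : vertex n :=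
  match x with
  | inl (i, j) =>
      if odd (i + j) then inr (zmod i (1 + (i + n - k) * k), j)
      else inr (zmod i (i * k), j)
  | inr (i, j) =>
      if odd (i + j) then inl (zmod i (i * k), j)
      else inl (zmod i (1 + (i + n - k) * k), j)
  end.

(* tau; -1 + m is computed as m + (n - 1) mod n. *)
Definition tau (n k : nat) (x : vertex n) : vertex n :=
  match x with
  | inl (i, j) =>
      if odd (i + j) then inr (zmod i ((i + n - k) * k + (n - 1)), j)
      else inr (zmod i (i * k), j)
  | inr (i, j) =>
      if odd (i + j) then inl (zmod i (i * k), j)
      else inl (zmod i ((i + n - k) * k + (n - 1)), j)
  end.

From mathcomp Require Import all_boot zify.

Set Implicit Arguments. Unset Strict Implicit. Unset Printing Implicit Defensive.

(* Both lam and tau are instances of the map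
     (u_i, j) |-> (v_(ik + [i+j odd] c), j),   (v_i, j) |-> (u_(ik + [i+j even] c), j)
   with c = 1 - k^2 for lam and c = -1 - k^2 for tau (mod n).  As k is even and
   c odd, the parity of the new subscript remembers [i+j odd]; together with
   gcd(n/2, k) = 1 this makes the map injective.  It sends spokes to spokes and
   u-edges to v-edges, while a v-edge goes to a pair of u-vertices whose
   subscripts differ by c + k^2 or by k^2 - c.  Since c + k^2 = 1 resp. -1, the
   map preserves adjacency iff k^2 - c = 2k^2 - 1 resp. 2k^2 + 1 is +-1 mod n,
   i.e. iff k^2 = 1 resp. -1 mod n/2 (k^2 = 0 mod n/2 being excluded by
   coprimality); an injective edge-preserving self-map of a finite graph is an
   automorphism. *)

Lemma inj_homo_mono (T : finType) (e : rel T) (f : T -> T) :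
  injective f -> {homo f : x y / e x y} -> {mono f : x y / e x y}.
Proof.
move=> f_inj f_homo x y; apply/idP/idP; last exact: f_homo.
pose E := [set p : T * T | e p.1 p.2].
pose F (p : T * T) := (f p.1, f p.2).
have F_inj : injective F by move=> [a b] [a' b'] [] /f_inj -> /f_inj ->.
have FE : F @: E = E.
  apply/eqP; rewrite eqEcard card_imset // leqnn andbT.
  by apply/subsetP => _ /imsetP[p + ->]; rewrite !inE; apply: f_homo.
move=> exy; have : F (x, y) \in F @: E by rewrite FE inE.
by case/imsetP=> p + /F_inj eq_p; rewrite -eq_p inE.
Qed.

Definition cyc_adj (n s a b : nat) : bool :=
  (b == a + s %[mod n]) || (a == b + s %[mod n]).

Section CyclicAdjacency.
Variables (n s : nat).

Lemma cyc_adjC a b : cyc_adj n s a b = cyc_adj n s b a.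
Proof. exact: orbC. Qed.

Lemma cyc_adj_congr a a' b b' : a = a' %[mod n] -> b = b' %[mod n] ->
  cyc_adj n s a b = cyc_adj n s a' b'.
Proof.
by move=> eq_a eq_b; rewrite /cyc_adj -!(modnDml a) -!(modnDml b) eq_a eq_b !modnDml.
Qed.

Lemma cyc_adj_mod a b : cyc_adj n s (a %% n) (b %% n) = cyc_adj n s a b.
Proof. exact: cyc_adj_congr (modn_mod a n) (modn_mod b n). Qed.

Lemma cyc_adjDr x a b : cyc_adj n s (a + x) (b + x) = cyc_adj n s a b.
Proof. by rewrite /cyc_adj !(addnAC _ x) !eqn_modDr. Qed.

Lemma cyc_adjMr k a b : cyc_adj n s a b -> cyc_adj n (s * k) (a * k) (b * k).
Proof.
by case/orP=> /eqP eq_ab; apply/orP; [left|right];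
  rewrite -modnMml eq_ab modnMml mulnDl.
Qed.

Lemma cyc_adj_odd a b : ~~ odd n -> cyc_adj n s a b -> odd b = odd s (+) odd a.
Proof.
move/negbTE=> n_even; case/orP=> /eqP/(congr1 odd); rewrite !odd_mod // oddD.
  by rewrite addbC.
by move=> ->; rewrite addbC -addbA addbb addbF.
Qed.

End CyclicAdjacency.

Lemma dgp_adjC n k (x y : vertex n) : dgp_adj k x y = dgp_adj k y x.
Proof.
case: x y => [[i j]|[i j]] [[i' j']|[i' j']] /=;
  rewrite ?(eq_sym i) ?(orbC (val i' == _));
  by case: j j' => [] [].
Qed.

Lemma dgp_adj_uu n k (i i' : 'I_n) j j' :
  dgp_adj k (inl (i, j)) (inl (i', j')) = (j' == ~~ j) && cyc_adj n 1 i i'.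
Proof. by rewrite /= /cyc_adj !(modn_small (ltn_ord _)). Qed.

Lemma dgp_adj_vv n k (i i' : 'I_n) j j' :
  dgp_adj k (inr (i, j)) (inr (i', j')) = (j' == ~~ j) && cyc_adj n k i i'.
Proof. by rewrite /= /cyc_adj !(modn_small (ltn_ord _)). Qed.

Definition swap_map (n k c : nat) (x : vertex n) : vertex n :=
  match x with
  | inl (i, j) => inr (zmod i (i * k + odd (i + j) * c), j)
  | inr (i, j) => inl (zmod i (i * k + ~~ odd (i + j) * c), j)
  end.

Lemma swap_map_in_B n k c : in_A k (@swap_map n k c) -> in_B k (@swap_map n k c).
Proof.
move=> fA; split=> // x y; rewrite /is_spoke fA.2.
by case: x y => [[i j]|[i j]] [[i' j']|[i' j']].
Qed.

Section SwapMap.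
Variables (m k c : nat).
Let n := m.*2.
Hypotheses (coprime_mk : coprime m k) (k_even : ~~ odd k) (c_odd : odd c).

Let n_even : ~~ odd n. Proof. by rewrite odd_double. Qed.

Lemma odd_swap_index i (e : bool) : odd (i * k + e * c) = e.
Proof. by rewrite oddD !oddM oddb (negbTE k_even) c_odd andbF andbT. Qed.

Lemma muln_mod_inj_parity i i' : i < n -> i' < n -> odd i = odd i' ->
  i * k = i' * k %[mod n] -> i = i'.
Proof.
wlog le_i'i : i i' / i' <= i.
  by move=> W ? ? ? ?; case: (leqP i' i) => [|/ltnW] ?; [|symmetry]; apply: W.
move=> lt_in lt_i'n odd_ii' /eqP.
rewrite eqn_mod_dvd ?leq_mul2r ?le_i'i ?orbT // -mulnBl.
have d_even : ~~ odd (i - i') by rewrite oddB // odd_ii' addbb.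
rewrite /n -(even_halfK d_even) -!muln2 mulnAC dvdn_pmul2r // Gauss_dvdl //.
rewrite -(dvdn_pmul2r (isT : 0 < 2)) !muln2 (even_halfK d_even) -/n => n_dvd.
by case: (posnP (i - i')) => [|/dvdn_leq/(_ n_dvd)]; lia.
Qed.

Lemma swap_index_inj (i i' : 'I_n) (e e' : bool) : e (+) odd i = e' (+) odd i' ->
  i * k + e * c = i' * k + e' * c %[mod n] -> i = i'.
Proof.
move=> odd_sum eq_idx.
have e_eq : e = e'.
  by have := congr1 odd eq_idx; rewrite !odd_mod ?(negbTE n_even) // !odd_swap_index.
move: odd_sum eq_idx; rewrite e_eq => /addbI odd_ii' /eqP; rewrite eqn_modDr => /eqP.
by move/(muln_mod_inj_parity (ltn_ord i) (ltn_ord i') odd_ii')/val_inj.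
Qed.

Lemma swap_map_inj : injective (@swap_map n k c).
Proof.
case=> [[i j]|[i j]] [[i' j']|[i' j']] //= [eq_idx eq_jj']; subst j';
  rewrite (swap_index_inj _ eq_idx) // !oddD !oddb;
  by clear eq_idx; case: (odd i) (odd i') j => [] [] [].
Qed.

Lemma swap_map_v_step a a' (e : bool) :
  cyc_adj n 1 c (k ^ 2) -> cyc_adj n 1 0 (c + k ^ 2) ->
  a' = a + k %[mod n] -> cyc_adj n 1 (a * k + ~~ e * c) (a' * k + e * c).
Proof.
move=> adj_c adj_0 eq_a'.
have eq_a'k : a' * k + e * c = a * k + (k ^ 2 + e * c) %[mod n].
  by rewrite -modnDml -modnMml eq_a' modnMml modnDml mulnDl mulnn addnA.
rewrite (cyc_adj_congr _ (erefl _) eq_a'k) !(addnC (a * k)) cyc_adjDr {eq_a'k}.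
by case: e; rewrite /= ?mul1n ?mul0n ?addn0 // addnC.
Qed.

Lemma swap_map_homo : cyc_adj n 1 c (k ^ 2) -> cyc_adj n 1 0 (c + k ^ 2) ->
  {homo @swap_map n k c : x y / dgp_adj k x y}.
Proof.
move=> adj_c adj_0.
have spoke i j : dgp_adj k (@swap_map n k c (inl (i, j))) (@swap_map n k c (inr (i, ~~ j))).
  by rewrite /= !oddD !oddb addbN negbK !eqxx.
case=> [[i j]|[i j]] [[i' j']|[i' j']].
- rewrite dgp_adj_uu => /andP[/eqP-> adj_ii'].
  rewrite /swap_map dgp_adj_vv eqxx cyc_adj_mod !oddD !oddb.
  rewrite (cyc_adj_odd n_even adj_ii') addNb addbN negbK cyc_adjDr.
  by have := cyc_adjMr k adj_ii'; rewrite mul1n.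
- by move=> /andP[/eqP<- /eqP->]; apply: spoke.
- by rewrite dgp_adjC => /andP[/eqP<- /eqP->]; rewrite dgp_adjC; apply: spoke.
- rewrite dgp_adj_vv => /andP[/eqP-> adj_ii'].
  rewrite /swap_map dgp_adj_uu eqxx cyc_adj_mod !oddD !oddb.
  rewrite (cyc_adj_odd n_even adj_ii') (negbTE k_even) addFb addbN negbK /=.
  case/orP: adj_ii' => /eqP eq_i'; first exact: swap_map_v_step.
  by rewrite cyc_adjC -{1}[odd i (+) j]negbK swap_map_v_step.
Qed.

Lemma in_A_swap_map : k < n -> cyc_adj n 1 0 (c + k ^ 2) ->
  in_A k (@swap_map n k c) <-> cyc_adj n 1 c (k ^ 2).
Proof.
move=> lt_kn adj_0; split=> [[_ f_mono] | adj_c]; last first.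
  split; first exact: injF_bij swap_map_inj.
  exact: inj_homo_mono swap_map_inj (swap_map_homo adj_c adj_0).
have n_gt0 : 0 < n := leq_ltn_trans (leq0n k) lt_kn.
(* the image of the edge {(v_0, 0), (v_k, 1)} is {(u_c, 0), (u_(k^2), 1)} *)
have := f_mono (inr (Ordinal n_gt0, false)) (inr (Ordinal lt_kn, true)).
rewrite /swap_map dgp_adj_uu dgp_adj_vv cyc_adj_mod /= addn1 /= (negbTE k_even).
by rewrite mul0n mul1n !add0n addn0 mulnn => ->; rewrite /cyc_adj eqxx.
Qed.
End SwapMap.

Lemma eqn_mod_double m a b : (a.*2 == b.*2 %[mod m.*2]) = (a == b %[mod m]).
Proof. by rewrite -!muln2 -!muln_modl eqn_pmul2r. Qed.

Section SquareConditions.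
Variables (m k : nat).
Let n := m.*2.
Hypotheses (coprime_mk : coprime m k) (k_even : ~~ odd k).
Hypotheses (k_gt0 : 0 < k) (k_lt_m : k < m).

Lemma sqr_mod_neq0 : (k ^ 2 == 0 %[mod m]) = false.
Proof.
rewrite mod0n -mulnn -/(m %| k * k) Gauss_dvdl //.
by apply/negbTE/negP => /(dvdn_leq k_gt0); rewrite leqNgt k_lt_m.
Qed.

Let k_lt_n : k < n. Proof. by rewrite /n -addnn ltn_addr. Qed.

Lemma in_A_swap_map_sqr_eq1 c : c + k ^ 2 = 1 %[mod n] ->
  in_A k (@swap_map n k c) <-> k ^ 2 = 1 %[mod m].
Proof.
move=> ck1.
have c_odd : odd c.
  by move/(congr1 odd): ck1; rewrite !odd_mod ?odd_double // oddD oddX (negbTE k_even) addbF.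
have adj_0 : cyc_adj n 1 0 (c + k ^ 2).
  by rewrite (cyc_adj_congr _ (erefl _) ck1) /cyc_adj eqxx.
rewrite (in_A_swap_map coprime_mk k_even c_odd k_lt_n adj_0).
rewrite -(cyc_adjDr _ _ (k ^ 2)) (cyc_adj_congr _ ck1 (erefl _)) addnn /cyc_adj.
rewrite (eqn_mod_double m _ 1) (eqn_modDr 1 0) (eqn_mod_double m 0) [X in _ || X]eq_sym.
by rewrite sqr_mod_neq0 orbF; split=> /eqP.
Qed.

Lemma in_A_swap_map_sqr_eqN1 c : c + k ^ 2 + 1 = 0 %[mod n] ->
  in_A k (@swap_map n k c) <-> k ^ 2 + 1 = 0 %[mod m].
Proof.
move=> ck1.
have c_odd : odd c.
  move/(congr1 odd): ck1; rewrite !odd_mod ?odd_double // !oddD oddX (negbTE k_even).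
  by rewrite addbF addbT => /negbFE.
have adj_0 : cyc_adj n 1 0 (c + k ^ 2) by rewrite /cyc_adj ck1 eqxx orbT.
rewrite (in_A_swap_map coprime_mk k_even c_odd k_lt_n adj_0).
rewrite -(cyc_adjDr _ _ (k ^ 2 + 1)) addnA (cyc_adj_congr _ ck1 (erefl _)).
rewrite addnA addnn /cyc_adj eqn_modDr -addnA -[1 + 1]/(1.*2) -doubleD.
rewrite (eqn_mod_double m _ 0) (eqn_mod_double m 0) sqr_mod_neq0 eq_sym.
by split=> /eqP.
Qed.
End SquareConditions.

Lemma eq_in_A n k (f g : vertex n -> vertex n) : f =1 g -> in_A k f <-> in_A k g.
Proof.
suff imp (f1 f2 : vertex n -> vertex n) : f1 =1 f2 -> in_A k f1 -> in_A k f2.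
  by move=> eq_fg; split; apply: imp => // x; rewrite eq_fg.
move=> eq_f [bij_f1 mono_f1]; split=> [|x y]; first exact: (eq_bij bij_f1 eq_f).
by rewrite -!eq_f.
Qed.

Lemma eq_in_B n k (f g : vertex n -> vertex n) : f =1 g -> in_B k f -> in_B k g.
Proof.
move=> eq_fg [/(eq_in_A k eq_fg) A_g spoke_f]; split=> // x y.
by rewrite -!eq_fg.
Qed.

Lemma lam_swap_map n k : k <= n -> @lam n k =1 @swap_map n k ((n - k) * k + 1).
Proof.
move=> le_kn [[i j]|[i j]] /=; case: (odd (i + j)) => /=;
  do 2 f_equal; apply/val_inj; rewrite /= ?mul0n ?addn0 // mul1n;
  by congr (_ %% n); rewrite -addnBA // mulnDl; lia.
Qed.

Lemma tau_swap_map n k : k <= n -> @tau n k =1 @swap_map n k ((n - k) * k + (n - 1)).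
Proof.
move=> le_kn [[i j]|[i j]] /=; case: (odd (i + j)) => /=;
  do 2 f_equal; apply/val_inj; rewrite /= ?mul0n ?addn0 // mul1n;
  by congr (_ %% n); rewrite -addnBA // mulnDl; lia.
Qed.

Lemma coprime_half m k : odd m -> gcdn m.*2 k = 2 -> coprime m k.
Proof.
move=> m_odd gcd2.
by rewrite /coprime -[m in gcdn m k](gcdnMr m 2) -gcdnA muln2 gcd2 -/(coprime m 2) coprimen2.
Qed.

Theorem lemma5p3 (n k : nat) :
  ~~ odd n -> ~~ odd k -> 1 <= k -> k < n./2 -> gcdn n k = 2 -> ~~ (4 %| n) ->
  (in_A k (@lam n k) <-> k ^ 2 = 1 %[mod n./2]) /\
  (in_A k (@tau n k) <-> k ^ 2 + 1 = 0 %[mod n./2]) /\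
  (in_A k (@lam n k) -> in_B k (@lam n k)) /\
  (in_A k (@tau n k) -> in_B k (@tau n k)).
Proof.
move=> n_even k_even k_gt0 k_lt_m gcd_nk n_not4.
have [m n_eq] : exists m, n = m.*2 by exists n./2; rewrite even_halfK.
subst n.
rewrite doubleK in k_lt_m *.
have m_odd : odd m.
  by rewrite -[odd m]negbK -dvdn2 -(dvdn_pmul2r (_ : 0 < 2)) // [m * 2]muln2.
have coprime_mk := coprime_half m_odd gcd_nk.
have le_kn : k <= m.*2 by rewrite -addnn ltnW // ltn_addr.
have sq_kn : (m.*2 - k) * k + k ^ 2 = k * m.*2 by rewrite -mulnn -mulnDl subnK // mulnC.
have lam_c : (m.*2 - k) * k + 1 + k ^ 2 = 1 %[mod m.*2] by rewrite addnAC sq_kn modnMDl.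
have tau_c : (m.*2 - k) * k + (m.*2 - 1) + k ^ 2 + 1 = 0 %[mod m.*2].
  have -> : (m.*2 - k) * k + (m.*2 - 1) + k ^ 2 + 1 = k.+1 * m.*2 by rewrite mulSn; lia.
  by rewrite modnMl mod0n.
rewrite !(eq_in_A k (lam_swap_map le_kn)) !(eq_in_A k (tau_swap_map le_kn)).
split; first exact: in_A_swap_map_sqr_eq1 lam_c.
split; first exact: in_A_swap_map_sqr_eqN1 tau_c.
split=> /swap_map_in_B; apply: eq_in_B; apply: fsym.
- exact: lam_swap_map.
- exact: tau_swap_map.
Qed.
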